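(* Let $C\subset\mathbb{R}^p$ be a closed convex pointed cone containing $0$ with nonempty interior such that $P\subset\mathrm{int}(C)\cup\{0\}$. There exists a constant $M(C,P)\ge0$ such that for all $K_1,K_2\in\mathcal{K}(C,P)$, $$\mathcal{H}\big(\mathcal{E}(K_1,P),\mathcal{E}(K_2,P)\big)\le M(C,P)\,\mathcal{H}(K_1,K_2).$$
   Context: $\mathbb{R}^p$ carries the Euclidean norm. $P\subset\mathbb{R}^p$ is a closed convex pointed ($P\cap(-P)=\{0\}$) cone containing $0$ with nonempty interior. For nonempty $S\subset\mathbb{R}^p$ and such a cone $Q$, $\mathcal{E}(S,Q)=\{y\in S:(y-Q)\cap S=\{y\}\}$. $\mathcal{K}(C,P)$ is the set of nonempty compact $K\subset\mathbb{R}^p$ with $\mathcal{E}(K,P)=\mathcal{E}(K,C)$. For nonempty bounded $M_1,M_2$, the Hausdorff distance is $\mathcal{H}(M_1,M_2)=\max\{\sup_{m_1\in M_1}d(m_1,M_2),\sup_{m_2\in M_2}d(m_2,M_1)\}$, $d(y,S)=\inf_{m\in S}\|y-m\|$. *)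

From Stdlib Require Import Reals.
Open Scope R_scope.

(** Points of R^p are represented as functions nat -> R that vanish
    at every index >= p (predicate [in_Rp p]). *)
Definition vec := nat -> R.

Definition in_Rp (p : nat) (x : vec) : Prop := forall i, (p <= i)%nat -> x i = 0.

Definition vzero : vec := fun _ => 0.
Definition vadd (x y : vec) : vec := fun i => x i + y i.
Definition vsub (x y : vec) : vec := fun i => x i - y i.
Definition vopp (x : vec) : vec := fun i => - x i.
Definition vscal (t : R) (x : vec) : vec := fun i => t * x i.

Fixpoint sum_first (n : nat) (f : nat -> R) : R :=
  match n with
  | O => 0
  | S k => sum_first k f + f k
  end.

Definition vnorm (p : nat) (x : vec) : R := sqrt (sum_first p (fun i => x i * x i)).

Definition subset_Rp (p : nat) (S : vec -> Prop) : Prop := forall x, S x -> in_Rp p x.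

Definition closed_Rp (p : nat) (S : vec -> Prop) : Prop :=
  forall x, in_Rp p x ->
    (forall eps, 0 < eps -> exists y, S y /\ vnorm p (vsub x y) < eps) -> S x.

Definition interior_pt (p : nat) (S : vec -> Prop) (x : vec) : Prop :=
  in_Rp p x /\ exists r, 0 < r /\ forall y, in_Rp p y -> vnorm p (vsub y x) < r -> S y.

Definition good_cone (p : nat) (C : vec -> Prop) : Prop :=
  subset_Rp p C /\
  closed_Rp p C /\
  C vzero /\
  (forall x y, C x -> C y -> C (vadd x y)) /\
  (forall t x, 0 <= t -> C x -> C (vscal t x)) /\
  (forall x, C x -> C (vopp x) -> x = vzero) /\
  (exists x, interior_pt p C x).

Definition compact_Rp (p : nat) (K : vec -> Prop) : Prop :=
  forall u : nat -> vec, (forall n, K (u n)) ->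
    exists (phi : nat -> nat) (l : vec),
      (forall n, (phi n < phi (S n))%nat) /\ K l /\
      (forall eps, 0 < eps -> exists N, forall n, (N <= n)%nat ->
          vnorm p (vsub (u (phi n)) l) < eps).

Definition eff (S Q : vec -> Prop) (y : vec) : Prop :=
  S y /\ forall z, S z -> (exists q, Q q /\ z = vsub y q) -> z = y.

Definition KCP (p : nat) (C P : vec -> Prop) (K : vec -> Prop) : Prop :=
  subset_Rp p K /\ (exists x, K x) /\ compact_Rp p K /\
  (forall y, eff K P y <-> eff K C y).

Definition is_inf (E : R -> Prop) (m : R) : Prop :=
  (forall x, E x -> m <= x) /\ (forall b, (forall x, E x -> b <= x) -> b <= m).

Definition is_dist (p : nat) (y : vec) (S : vec -> Prop) (d : R) : Prop :=
  is_inf (fun r => exists m, S m /\ r = vnorm p (vsub y m)) d.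

Definition is_hausdorff (p : nat) (A B : vec -> Prop) (h : R) : Prop :=
  exists s1 s2,
    is_lub (fun r => exists a, A a /\ is_dist p a B r) s1 /\
    is_lub (fun r => exists b, B b /\ is_dist p b A r) s2 /\
    h = Rmax s1 s2.

(** The
    proof rests on two facts about the cones:
    - a vector m with ⟨m,q⟩ > 0 for q ∈ P ∖ {0} (the minimal-norm point of
      c0 + C, c0 ∈ int C, lies in the dual cone of C); minimising ⟨m,·⟩ on
      K ∩ (z − P) shows that every z ∈ K lies above some y ∈ E(K,P);
    - a margin d ∈ (0,1] with q + e ∈ C whenever q ∈ P and ‖e‖ < d‖q‖
      (compactness of the unit sphere of P); so for a ∈ E(K,C), w ∈ K and
      q ∈ P we get d‖q‖ ≤ ‖(a − w) − q‖.
    For a ∈ E(K₁,P) take z ∈ K₂ near a, y ∈ E(K₂,P) below z and w ∈ K₁ near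
    y; the margin inequality with q = z − y gives ‖z − y‖ ≤ 2h/d, where
    h = H(K₁,K₂), hence d(a, E(K₂,P)) ≤ (1 + 2/d) h, i.e. M = 1 + 2/d.
    The file develops, in order: the Euclidean structure of R^p, sequential
    compactness (Bolzano–Weierstrass, minima of Lipschitz functions),
    distances and Hausdorff distances, the two cone facts, efficient points,
    and finally the estimate. *)

From Stdlib Require Import Reals Lra Lia FunctionalExtensionality Classical ClassicalEpsilon.
Open Scope R_scope.

Ltac vext := apply functional_extensionality; intro;
  unfold vsub, vadd, vopp, vscal, vzero; try ring.

Lemma Rabs_le_inv a b : Rabs a <= b -> - b <= a <= b.
Proof.
  intros H. pose proof (Rle_abs a). pose proof (Rle_abs (- a)).
  rewrite Rabs_Ropp in *. lra.
Qed.

Lemma sum_first_ext n f g :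
  (forall i, (i < n)%nat -> f i = g i) -> sum_first n f = sum_first n g.
Proof.
  induction n as [|n IH]; intros H; simpl; [reflexivity|].
  rewrite IH, H by (lia || (intros; apply H; lia)); reflexivity.
Qed.

Lemma sum_first_add n f g :
  sum_first n (fun i => f i + g i) = sum_first n f + sum_first n g.
Proof. induction n as [|n IH]; simpl; [ring|]. rewrite IH; ring. Qed.

Lemma sum_first_scal n c f :
  sum_first n (fun i => c * f i) = c * sum_first n f.
Proof. induction n as [|n IH]; simpl; [ring|]. rewrite IH; ring. Qed.

Lemma sum_first_nonneg n f :
  (forall i, (i < n)%nat -> 0 <= f i) -> 0 <= sum_first n f.
Proof.
  induction n as [|n IH]; intros H; simpl; [lra|].
  assert (0 <= sum_first n f) by (apply IH; intros; apply H; lia).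
  assert (0 <= f n) by (apply H; lia). lra.
Qed.

Lemma sum_first_term n f i :
  (forall j, (j < n)%nat -> 0 <= f j) -> (i < n)%nat -> f i <= sum_first n f.
Proof.
  induction n as [|n IH]; intros H Hi; simpl; [lia|].
  assert (0 <= f n) by (apply H; lia).
  destruct (Nat.eq_dec i n) as [->|Hne].
  - assert (0 <= sum_first n f) by (apply sum_first_nonneg; intros; apply H; lia). lra.
  - assert (f i <= sum_first n f) by (apply IH; [intros; apply H; lia | lia]). lra.
Qed.

Lemma sum_first_bound n f c :
  (forall i, (i < n)%nat -> f i <= c) -> sum_first n f <= INR n * c.
Proof.
  induction n as [|n IH]; intros H; [simpl; lra|].
  rewrite S_INR; simpl sum_first.
  assert (sum_first n f <= INR n * c) by (apply IH; intros; apply H; lia).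
  assert (f n <= c) by (apply H; lia). lra.
Qed.

Definition vdot (p : nat) (x y : vec) : R := sum_first p (fun i => x i * y i).

Lemma vdot_self_nonneg p x : 0 <= vdot p x x.
Proof. apply sum_first_nonneg; intros; nra. Qed.

Lemma vnorm_nonneg p x : 0 <= vnorm p x.
Proof. apply sqrt_pos. Qed.

Lemma vnorm_sq p x : vnorm p x * vnorm p x = vdot p x x.
Proof. apply sqrt_sqrt, vdot_self_nonneg. Qed.

Lemma vdot_sub_r p m x y : vdot p m (vsub x y) = vdot p m x - vdot p m y.
Proof. unfold vdot, vsub. induction p as [|p IH]; simpl; [ring|]. rewrite IH; ring. Qed.

Lemma vdot_scal_r p m t x : vdot p m (vscal t x) = t * vdot p m x.
Proof. unfold vdot. rewrite <- sum_first_scal. apply sum_first_ext; intros; unfold vscal; ring. Qed.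

Lemma vdot_expand p x y t :
  vdot p (vadd x (vscal t y)) (vadd x (vscal t y))
  = vdot p x x + 2 * t * vdot p x y + t * t * vdot p y y.
Proof.
  unfold vdot. rewrite <- !sum_first_scal, <- !sum_first_add.
  apply sum_first_ext; intros; unfold vadd, vscal; ring.
Qed.

Lemma cauchy_schwarz_sq p x y : vdot p x y * vdot p x y <= vdot p x x * vdot p y y.
Proof.
  set (a := vdot p x x); set (b := vdot p x y); set (c := vdot p y y).
  assert (Hpoly : forall t, 0 <= a + 2 * t * b + t * t * c).
  { intros t; unfold a, b, c; rewrite <- vdot_expand; apply vdot_self_nonneg. }
  assert (0 <= a) by apply vdot_self_nonneg.
  destruct (Req_dec c 0) as [Hc|Hc].
  - destruct (Req_dec b 0) as [Hb|Hb]; [rewrite Hb; nra|].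
    specialize (Hpoly (- (a + 1) / (2 * b))); rewrite Hc in Hpoly.
    replace (a + 2 * (- (a + 1) / (2 * b)) * b + - (a + 1) / (2 * b) * (- (a + 1) / (2 * b)) * 0)
      with (-1) in Hpoly by (field; auto). lra.
  - assert (0 < c) by (pose proof (vdot_self_nonneg p y); unfold c in *; lra).
    specialize (Hpoly (- b / c)).
    replace (a + 2 * (- b / c) * b + - b / c * (- b / c) * c) with ((a * c - b * b) / c)
      in Hpoly by (field; lra).
    assert (0 <= a * c - b * b).
    { apply Rmult_le_reg_r with (/ c); [apply Rinv_0_lt_compat; lra | lra]. }
    lra.
Qed.

Lemma cauchy_schwarz p x y : Rabs (vdot p x y) <= vnorm p x * vnorm p y.
Proof.
  unfold vnorm; rewrite <- sqrt_mult by apply vdot_self_nonneg.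
  rewrite <- sqrt_Rsqr_abs. apply sqrt_le_1_alt. apply cauchy_schwarz_sq.
Qed.

Lemma sqrt_le_of_sq a b : 0 <= b -> a <= b * b -> sqrt a <= b.
Proof. intros Hb H. rewrite <- (sqrt_square b Hb). apply sqrt_le_1_alt, H. Qed.

Lemma vnorm_add p x y : vnorm p (vadd x y) <= vnorm p x + vnorm p y.
Proof.
  pose proof (vnorm_nonneg p x); pose proof (vnorm_nonneg p y).
  change (sqrt (vdot p (vadd x y) (vadd x y)) <= vnorm p x + vnorm p y).
  apply sqrt_le_of_sq; [lra|].
  replace (vadd x y) with (vadd x (vscal 1 y)) by vext.
  rewrite vdot_expand, <- (vnorm_sq p x), <- (vnorm_sq p y).
  pose proof (Rle_abs (vdot p x y)); pose proof (cauchy_schwarz p x y). nra.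
Qed.

Lemma vnorm_scal p t x : vnorm p (vscal t x) = Rabs t * vnorm p x.
Proof.
  change (sqrt (vdot p (vscal t x) (vscal t x)) = Rabs t * sqrt (vdot p x x)).
  replace (vdot p (vscal t x) (vscal t x)) with ((t * t) * vdot p x x).
  - rewrite sqrt_mult by (nra || apply vdot_self_nonneg).
    f_equal. apply sqrt_Rsqr_abs.
  - rewrite !vdot_scal_r. unfold vdot. rewrite <- !sum_first_scal.
    apply sum_first_ext; intros; unfold vscal; ring.
Qed.

Lemma vnorm_opp p x : vnorm p (vopp x) = vnorm p x.
Proof.
  replace (vopp x) with (vscal (-1) x) by vext.
  rewrite vnorm_scal, Rabs_left by lra; ring.
Qed.

Lemma vnorm_vzero p : vnorm p vzero = 0.
Proof.
  replace vzero with (vscal 0 vzero) by vext.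
  rewrite vnorm_scal, Rabs_R0; ring.
Qed.

Lemma vnorm_sub_comm p x y : vnorm p (vsub x y) = vnorm p (vsub y x).
Proof. replace (vsub y x) with (vopp (vsub x y)) by vext. symmetry; apply vnorm_opp. Qed.

Lemma vnorm_sub_triangle p x y z :
  vnorm p (vsub x z) <= vnorm p (vsub x y) + vnorm p (vsub y z).
Proof. replace (vsub x z) with (vadd (vsub x y) (vsub y z)) by vext. apply vnorm_add. Qed.

Lemma vnorm_sub_le p x y : vnorm p (vsub x y) <= vnorm p x + vnorm p y.
Proof.
  replace (vsub x y) with (vadd x (vopp y)) by vext.
  rewrite <- (vnorm_opp p y). apply vnorm_add.
Qed.

Lemma vnorm_le_sub p x y : vnorm p x <= vnorm p (vsub x y) + vnorm p y.
Proof. replace x with (vadd (vsub x y) y) at 1 by vext. apply vnorm_add. Qed.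

Lemma vnorm_lipschitz p x y : Rabs (vnorm p x - vnorm p y) <= vnorm p (vsub x y).
Proof.
  pose proof (vnorm_le_sub p x y); pose proof (vnorm_le_sub p y x).
  rewrite (vnorm_sub_comm p y x) in *. apply Rabs_le; lra.
Qed.

Lemma coord_le_vnorm p x i : (i < p)%nat -> Rabs (x i) <= vnorm p x.
Proof.
  intros Hi. unfold vnorm. rewrite <- sqrt_Rsqr_abs. apply sqrt_le_1_alt.
  apply (sum_first_term p (fun i => x i * x i)); auto. intros; nra.
Qed.

Lemma vnorm_le_coords p x eta :
  0 <= eta -> (forall i, (i < p)%nat -> Rabs (x i) <= eta) -> vnorm p x <= INR p * eta.
Proof.
  intros He H. pose proof (pos_INR p).
  apply sqrt_le_of_sq; [apply Rmult_le_pos; auto|].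
  eapply Rle_trans.
  - apply (sum_first_bound p _ (eta * eta)). intros i Hi.
    specialize (H i Hi). pose proof (Rabs_pos (x i)).
    replace (x i * x i) with (Rabs (x i) * Rabs (x i))
      by (rewrite <- Rabs_mult; apply Rabs_pos_eq; nra).
    nra.
  - assert (INR p <= INR p * INR p).
    { destruct p; [simpl; lra|]. rewrite S_INR. pose proof (pos_INR p). nra. }
    assert (0 <= eta * eta) by nra. nra.
Qed.

Lemma vnorm_eq0 p x : in_Rp p x -> vnorm p x = 0 -> x = vzero.
Proof.
  intros Hx H. apply functional_extensionality; intro i; unfold vzero.
  destruct (Compare_dec.le_lt_dec p i) as [Hi|Hi]; [apply Hx; auto|].
  pose proof (coord_le_vnorm p x i Hi). rewrite H in *.
  destruct (Req_dec (x i) 0) as [E|E]; auto.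
  pose proof (Rabs_pos_lt _ E). lra.
Qed.

Lemma vnorm_pos p x : in_Rp p x -> x <> vzero -> 0 < vnorm p x.
Proof.
  intros Hx Hn. destruct (vnorm_nonneg p x) as [H|H]; auto.
  exfalso. apply Hn, (vnorm_eq0 p); auto.
Qed.

Lemma vsub_in p x y : in_Rp p x -> in_Rp p y -> in_Rp p (vsub x y).
Proof. intros Hx Hy i Hi. unfold vsub. rewrite Hx, Hy by auto. ring. Qed.
Lemma vadd_in p x y : in_Rp p x -> in_Rp p y -> in_Rp p (vadd x y).
Proof. intros Hx Hy i Hi. unfold vadd. rewrite Hx, Hy by auto. ring. Qed.
Lemma vopp_in p x : in_Rp p x -> in_Rp p (vopp x).
Proof. intros Hx i Hi. unfold vopp. rewrite Hx by auto. ring. Qed.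
Lemma vscal_in p t x : in_Rp p x -> in_Rp p (vscal t x).
Proof. intros Hx i Hi. unfold vscal. rewrite Hx by auto. ring. Qed.

Definition incr (phi : nat -> nat) : Prop := forall n, (phi n < phi (S n))%nat.

Lemma incr_ge phi : incr phi -> forall n, (n <= phi n)%nat.
Proof. intros H n; induction n as [|n IH]; [lia|]. specialize (H n); lia. Qed.

Lemma incr_mono phi : incr phi -> forall m n, (m <= n)%nat -> (phi m <= phi n)%nat.
Proof. intros H m n Hmn; induction Hmn as [|n _ IH]; [lia|]. specialize (H n); lia. Qed.

Lemma incr_comp f g : incr f -> incr g -> incr (fun n => f (g n)).
Proof.
  intros Hf Hg n. specialize (Hg n).
  assert (f (S (g n)) <= f (g (S n)))%nat by (apply incr_mono; auto).
  specialize (Hf (g n)); lia.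
Qed.

Lemma inv_Sn_pos n : 0 < / INR (S n).
Proof. apply Rinv_0_lt_compat, lt_0_INR; lia. Qed.

Lemma inv_Sn_eventually_lt eps :
  0 < eps -> exists N, forall n, (N <= n)%nat -> / INR (S n) < eps.
Proof.
  intros He. destruct (archimed_cor1 eps He) as [N [HN HN0]].
  exists N. intros n Hn. eapply Rle_lt_trans; [|exact HN].
  apply Rinv_le_contravar; [apply lt_0_INR; lia | apply le_INR; lia].
Qed.


Definition cvg (p : nat) (u : nat -> vec) (l : vec) : Prop :=
  forall eps, 0 < eps -> exists N, forall n, (N <= n)%nat -> vnorm p (vsub (u n) l) < eps.

Lemma cvg_closure p (K : vec -> Prop) u l :
  (forall n, K (u n)) -> cvg p u l ->
  forall eps, 0 < eps -> exists y, K y /\ vnorm p (vsub l y) < eps.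
Proof.
  intros Hu Hcv eps He. destruct (Hcv eps He) as [N HN].
  exists (u N). split; auto. rewrite vnorm_sub_comm. apply HN; lia.
Qed.

Lemma bolzano_weierstrass_R (v : nat -> R) B :
  (forall n, Rabs (v n) <= B) ->
  exists phi l, incr phi /\ forall n, Rabs (v (phi n) - l) < / INR (S n).
Proof.
  intros HB.
  destruct (Bolzano_Weierstrass v (fun c => -B <= c <= B) (compact_P3 (-B) B)) as [l Hl].
  { intros n. specialize (HB n). apply Rabs_le_inv in HB. lra. }
  assert (Hclose : forall N k, exists q, (N <= q)%nat /\ Rabs (v q - l) < / INR (S k)).
  { intros N k. set (d := mkposreal _ (inv_Sn_pos k)).
    destruct (Hl (disc l d) N) as [q [Hq1 Hq2]]; [exists d; intros y Hy; exact Hy|].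
    exists q; auto. }
  destruct (choice _ (fun N => choice _ (Hclose N))) as [g Hg].
  pose (phi := fix f n := match n with 0%nat => g 0%nat 0%nat | S n => g (S (f n)) (S n) end).
  exists phi, l. split.
  - intros n. simpl. destruct (Hg (S (phi n)) (S n)). lia.
  - intros [|n]; simpl; [apply (Hg 0%nat 0%nat) | apply (Hg _ (S n))].
Qed.

Lemma bolzano_weierstrass_coords p (u : nat -> vec) B :
  (forall n i, (i < p)%nat -> Rabs (u n i) <= B) ->
  exists phi l, incr phi /\ forall eps, 0 < eps -> exists N, forall n, (N <= n)%nat ->
    forall i, (i < p)%nat -> Rabs (u (phi n) i - l i) < eps.
Proof.
  revert u. induction p as [|p IH]; intros u HB.
  - exists (fun n => n), vzero. split; [intros n; lia|].
    intros eps He; exists 0%nat; intros; lia.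
  - destruct (IH u) as [phi1 [l1 [Hi1 Hc1]]]; [intros; apply HB; lia|].
    destruct (bolzano_weierstrass_R (fun n => u (phi1 n) p) B) as [phi2 [l0 [Hi2 Hc2]]];
      [intros; apply HB; lia|].
    exists (fun n => phi1 (phi2 n)), (fun i => if Nat.eqb i p then l0 else l1 i).
    split; [apply incr_comp; auto|].
    intros eps He. destruct (Hc1 eps He) as [N1 HN1].
    destruct (inv_Sn_eventually_lt eps He) as [N2 HN2].
    exists (Nat.max N1 N2). intros n Hn i Hi.
    destruct (Nat.eqb_spec i p) as [->|Hne].
    + eapply Rlt_trans; [apply Hc2 | apply HN2; lia].
    + apply HN1; [pose proof (incr_ge _ Hi2 n); lia | lia].
Qed.

Lemma bolzano_weierstrass p (u : nat -> vec) B :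
  (forall n, vnorm p (u n) <= B) ->
  exists phi l, incr phi /\ in_Rp p l /\ cvg p (fun n => u (phi n)) l.
Proof.
  intros HB. destruct (bolzano_weierstrass_coords p u B) as [phi [l [Hi Hc]]].
  { intros n i Hi. eapply Rle_trans; [apply (coord_le_vnorm p); auto | apply HB]. }
  exists phi, (fun i => if Nat.ltb i p then l i else 0). split; [auto|]. split.
  { intros i Hip. destruct (Nat.ltb_spec i p); [lia | reflexivity]. }
  intros eps He. set (eta := eps / (INR p + 1)).
  assert (Hp : 0 < INR p + 1) by (pose proof (pos_INR p); lra).
  assert (Heta : 0 < eta) by (apply Rdiv_lt_0_compat; auto).
  destruct (Hc eta Heta) as [N HN]. exists N. intros n Hn.
  eapply Rle_lt_trans.
  - apply (vnorm_le_coords p _ eta); [lra|]. intros i Hi'. unfold vsub.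
    destruct (Nat.ltb_spec i p); [apply Rlt_le, HN; auto | lia].
  - assert (INR p * eta = eps - eta) by (unfold eta; field; lra). lra.
Qed.

Definition vbounded (p : nat) (A : vec -> Prop) : Prop :=
  exists B, forall x, A x -> vnorm p x <= B.

Lemma closed_bounded_compact p A :
  subset_Rp p A -> closed_Rp p A -> vbounded p A -> compact_Rp p A.
Proof.
  intros Hs Hc [B HB] u Hu.
  destruct (bolzano_weierstrass p u B) as [phi [l [Hi [Hl Hcv]]]]; [auto|].
  exists phi, l. repeat split; auto.
  apply Hc; auto. apply (cvg_closure p A (fun n => u (phi n))); auto.
Qed.

(** Conversely, a compact set is bounded (an unbounded sequence has no
    convergent subsequence). *)
Lemma compact_bounded p K : compact_Rp p K -> vbounded p K.
Proof.
  intros Hc. apply NNPP. intros Hn.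
  assert (Hfar : forall n, exists x, K x /\ INR n < vnorm p x).
  { intros n. apply NNPP. intros H. apply Hn. exists (INR n). intros x Hx.
    apply Rnot_lt_le. intros H'. apply H. eauto. }
  destruct (choice _ Hfar) as [u Hu].
  destruct (Hc u (fun n => proj1 (Hu n))) as [phi [l [Hi [Hl Hcv]]]].
  destruct (Hcv 1 ltac:(lra)) as [N HN].
  destruct (INR_unbounded (vnorm p l + 1)) as [n0 Hn0].
  set (n := Nat.max N n0).
  assert (A1 := HN n ltac:(lia)). assert (A2 := proj2 (Hu (phi n))).
  assert (A3 := le_INR _ _ (incr_ge _ Hi n)). assert (A4 := le_INR n0 n ltac:(lia)).
  pose proof (vnorm_le_sub p (u (phi n)) l). lra.
Qed.

Lemma compact_inter_closed p K F :
  subset_Rp p K -> compact_Rp p K -> closed_Rp p F -> compact_Rp p (fun x => K x /\ F x).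
Proof.
  intros Hs HK HF u Hu.
  destruct (HK u (fun n => proj1 (Hu n))) as [phi [l [Hi [Hl Hcv]]]].
  exists phi, l. repeat split; auto.
  apply HF; auto. apply (cvg_closure p F (fun n => u (phi n))); [intros; apply Hu | exact Hcv].
Qed.

Lemma compact_lipschitz_min p A (f : vec -> R) L :
  compact_Rp p A -> (exists x, A x) -> 0 <= L ->
  (forall x y, A x -> A y -> Rabs (f x - f y) <= L * vnorm p (vsub x y)) ->
  exists x, A x /\ forall y, A y -> f x <= f y.
Proof.
  intros Hc [x0 Hx0] HL Hf.
  destruct (compact_bounded p A Hc) as [B HB].
  destruct (completeness (fun r => exists y, A y /\ r = - f y)) as [s [Hs1 Hs2]].
  { exists (L * (B + vnorm p x0) - f x0). intros r [y [Hy ->]].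
    specialize (Hf y x0 Hy Hx0). apply Rabs_le_inv in Hf.
    pose proof (vnorm_sub_le p y x0). pose proof (HB y Hy).
    assert (L * vnorm p (vsub y x0) <= L * (B + vnorm p x0)) by (apply Rmult_le_compat_l; lra).
    lra. }
  { exists (- f x0). eauto. }
  assert (Hinf : forall y, A y -> - s <= f y).
  { intros y Hy. assert (- f y <= s) by (apply Hs1; eauto). lra. }
  assert (Hmin : forall n, exists y, A y /\ f y < - s + / INR (S n)).
  { intros n. apply NNPP. intros H. pose proof (inv_Sn_pos n).
    assert (s <= s - / INR (S n)); [|lra].
    apply Hs2. intros r [y [Hy ->]]. apply Rnot_lt_le. intros H'. apply H. exists y. split; auto. lra. }
  destruct (choice _ Hmin) as [u Hu].
  destruct (Hc u (fun n => proj1 (Hu n))) as [phi [l [Hi [Hl Hcv]]]].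
  exists l. split; auto. intros y Hy. apply Rle_trans with (- s); [|apply Hinf; auto].
  apply Rle_plus_epsilon. intros eps He.
  destruct (Hcv (eps / (2 * (L + 1)))) as [N1 HN1]; [apply Rdiv_lt_0_compat; lra|].
  destruct (inv_Sn_eventually_lt (eps / 2)) as [N2 HN2]; [lra|].
  set (n := Nat.max N1 N2).
  assert (A1 := HN1 n ltac:(lia)).
  assert (A2 := proj2 (Hu (phi n))).
  assert (A3 := HN2 (phi n) ltac:(pose proof (incr_ge _ Hi n); lia)).
  assert (A4 := Hf _ _ (proj1 (Hu (phi n))) Hl). apply Rabs_le_inv in A4.
  assert (L * vnorm p (vsub (u (phi n)) l) <= eps / 2).
  { apply Rle_trans with (L * (eps / (2 * (L + 1)))); [apply Rmult_le_compat_l; lra|].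
    apply Rmult_le_reg_r with (2 * (L + 1)); [lra|].
    replace (L * (eps / (2 * (L + 1))) * (2 * (L + 1))) with (L * eps) by (field; lra). nra. }
  lra.
Qed.

Lemma dist_exists p y A : (exists m, A m) -> exists r, is_dist p y A r.
Proof.
  intros [m0 Hm0].
  destruct (completeness (fun r => exists m, A m /\ - r = vnorm p (vsub y m))) as [s [Hs1 Hs2]].
  { exists 0. intros r [m [_ Hr]]. pose proof (vnorm_nonneg p (vsub y m)). lra. }
  { exists (- vnorm p (vsub y m0)), m0. split; auto; ring. }
  exists (- s). split.
  - intros x [m [Hm ->]].
    assert (- vnorm p (vsub y m) <= s) by (apply Hs1; exists m; split; auto; ring). lra.
  - intros b Hb. assert (s <= - b); [|lra].
    apply Hs2. intros r [m [Hm Hr]]. assert (b <= - r) by (apply Hb; eauto). lra.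
Qed.

Lemma dist_le p y A r m : is_dist p y A r -> A m -> r <= vnorm p (vsub y m).
Proof. intros [H _] Hm. apply H; eauto. Qed.

Lemma dist_near p y A r eps :
  is_dist p y A r -> 0 < eps -> exists m, A m /\ vnorm p (vsub y m) < r + eps.
Proof.
  intros [_ H] He. apply NNPP. intros Hn. assert (r + eps <= r); [|lra].
  apply H. intros x [m [Hm ->]]. apply Rnot_lt_le. intros Hl. apply Hn; eauto.
Qed.

Lemma excess_exists p A B :
  (exists a, A a) -> (exists b, B b) -> vbounded p A -> vbounded p B ->
  exists s, is_lub (fun r => exists a, A a /\ is_dist p a B r) s.
Proof.
  intros [a0 Ha0] [b0 Hb0] [RA HRA] [RB HRB].
  destruct (completeness (fun r => exists a, A a /\ is_dist p a B r)) as [s Hs]; [| |eauto].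
  - exists (RA + RB). intros r [a [Ha Hr]].
    pose proof (dist_le _ _ _ _ _ Hr Hb0). pose proof (vnorm_sub_le p a b0).
    specialize (HRA a Ha). specialize (HRB b0 Hb0). lra.
  - destruct (dist_exists p a0 B) as [r Hr]; eauto.
Qed.

Lemma hausdorff_exists p A B :
  (exists a, A a) -> (exists b, B b) -> vbounded p A -> vbounded p B ->
  exists h, is_hausdorff p A B h.
Proof.
  intros HA HB HbA HbB.
  destruct (excess_exists p A B) as [s1 H1]; auto.
  destruct (excess_exists p B A) as [s2 H2]; auto.
  exists (Rmax s1 s2), s1, s2. auto.
Qed.

Lemma hausdorff_sym p A B h : is_hausdorff p A B h -> is_hausdorff p B A h.
Proof. intros [s1 [s2 [H1 [H2 ->]]]]. exists s2, s1. rewrite Rmax_comm. auto. Qed.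

Lemma hausdorff_near p A B h :
  is_hausdorff p A B h -> (exists b, B b) ->
  forall a, A a -> forall eps, 0 < eps -> exists b, B b /\ vnorm p (vsub a b) < h + eps.
Proof.
  intros [s1 [s2 [[Hs1 _] [_ ->]]]] HB a Ha eps He.
  destruct (dist_exists p a B HB) as [r Hr].
  assert (r <= s1) by (apply Hs1; eauto). pose proof (Rmax_l s1 s2).
  destruct (dist_near _ _ _ _ _ Hr He) as [b [Hb Hbl]]. exists b. split; auto. lra.
Qed.

Lemma hausdorff_le p A B h c :
  is_hausdorff p A B h ->
  (forall a r, A a -> is_dist p a B r -> r <= c) ->
  (forall b r, B b -> is_dist p b A r -> r <= c) -> h <= c.
Proof.
  intros [s1 [s2 [[_ Hs1] [[_ Hs2] ->]]]] HA HB.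
  apply Rmax_lub; [apply Hs1 | apply Hs2]; intros r [x [Hx Hr]]; eauto.
Qed.

Lemma pointed_interior_vzero p C :
  good_cone p C -> interior_pt p C vzero -> forall y, in_Rp p y -> y = vzero.
Proof.
  intros [_ [_ [_ [_ [_ [Hpt _]]]]]] [_ [r [Hr Hball]]] y Hy.
  apply NNPP. intros Hyn. pose proof (vnorm_pos p y Hy Hyn).
  set (t := r / (2 * vnorm p y)).
  assert (Ht : vnorm p (vscal t y) = r / 2).
  { rewrite vnorm_scal, Rabs_pos_eq; [unfold t; field; lra|].
    unfold t; apply Rlt_le, Rdiv_lt_0_compat; lra. }
  assert (C (vscal t y)).
  { apply Hball; [apply vscal_in; auto|]. replace (vsub (vscal t y) vzero) with (vscal t y) by vext. lra. }
  assert (C (vopp (vscal t y))).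
  { apply Hball; [apply vopp_in, vscal_in; auto|].
    replace (vsub (vopp (vscal t y)) vzero) with (vopp (vscal t y)) by vext. rewrite vnorm_opp. lra. }
  assert (Hz : vscal t y = vzero) by (apply Hpt; auto).
  rewrite Hz, vnorm_vzero in Ht. lra.
Qed.

Lemma translate_min_norm p C c0 :
  good_cone p C -> in_Rp p c0 ->
  exists m, in_Rp p m /\ C (vsub m c0) /\
    forall x, in_Rp p x -> C (vsub x c0) -> vnorm p m <= vnorm p x.
Proof.
  intros [HsC [HclC [H0C _]]] Hc0.
  set (D := fun x => in_Rp p x /\ C (vsub x c0) /\ vnorm p x <= vnorm p c0).
  assert (HD : compact_Rp p D).
  { apply closed_bounded_compact.
    - intros x [Hx _]; exact Hx.
    - intros x Hx Happ. split; [exact Hx|]. split.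
      + apply HclC; [apply vsub_in; auto|]. intros eps He.
        destruct (Happ eps He) as [y [[_ [Hy _]] Hxy]].
        exists (vsub y c0). split; auto.
        replace (vsub (vsub x c0) (vsub y c0)) with (vsub x y) by vext. exact Hxy.
      + apply Rnot_lt_le. intros Hlt.
        destruct (Happ (vnorm p x - vnorm p c0)) as [y [[_ [_ Hy]] Hxy]]; [lra|].
        pose proof (vnorm_le_sub p x y). lra.
    - exists (vnorm p c0). intros x [_ [_ H]]; exact H. }
  destruct (compact_lipschitz_min p D (vnorm p) 1 HD) as [m [[Hm1 [Hm2 Hm3]] Hmin]].
  - exists c0. repeat split; auto; [|lra]. replace (vsub c0 c0) with vzero by vext. exact H0C.
  - lra.
  - intros x y _ _. rewrite Rmult_1_l. apply vnorm_lipschitz.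
  - exists m. repeat split; auto. intros x Hx HCx.
    destruct (Rle_lt_dec (vnorm p x) (vnorm p c0)); [apply Hmin; repeat split; auto | lra].
Qed.

Lemma min_norm_dual p C c0 m :
  good_cone p C -> in_Rp p m -> C (vsub m c0) ->
  (forall x, in_Rp p x -> C (vsub x c0) -> vnorm p m <= vnorm p x) ->
  forall k, C k -> 0 <= vdot p m k.
Proof.
  intros [HsC [_ [_ [HaddC [HscC _]]]]] Hm HCm Hmin k Hk.
  assert (Hexp : forall t, 0 < t -> 0 <= 2 * vdot p m k + t * vdot p k k).
  { intros t Ht.
    assert (Hle : vnorm p m <= vnorm p (vadd m (vscal t k))).
    { apply Hmin; [apply vadd_in, vscal_in; auto|].
      replace (vsub (vadd m (vscal t k)) c0) with (vadd (vsub m c0) (vscal t k)) by vext.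
      apply HaddC; [exact HCm | apply HscC; [lra | exact Hk]]. }
    assert (Hsq : vdot p m m <= vdot p (vadd m (vscal t k)) (vadd m (vscal t k))).
    { rewrite <- !vnorm_sq. pose proof (vnorm_nonneg p m). nra. }
    rewrite vdot_expand in Hsq.
    apply Rmult_le_reg_l with t; [exact Ht|]. lra. }
  apply Rnot_lt_le. intros Hlt. pose proof (vdot_self_nonneg p k).
  set (t := - vdot p m k / (vdot p k k + 1)).
  assert (Ht : 0 < t) by (apply Rdiv_lt_0_compat; lra).
  assert (t * vdot p k k = - vdot p m k - t) by (unfold t; field; lra).
  specialize (Hexp t Ht). lra.
Qed.

Lemma dual_pos_interior p C m q :
  in_Rp p m -> m <> vzero -> (forall k, C k -> 0 <= vdot p m k) ->
  interior_pt p C q -> 0 < vdot p m q.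
Proof.
  intros Hm Hmn Hdual [Hq [r [Hr Hball]]].
  pose proof (vnorm_pos p m Hm Hmn).
  set (t := r / (2 * vnorm p m)).
  assert (Ht : 0 < t) by (unfold t; apply Rdiv_lt_0_compat; lra).
  assert (HC : C (vsub q (vscal t m))).
  { apply Hball; [apply vsub_in, vscal_in; auto|].
    replace (vsub (vsub q (vscal t m)) q) with (vopp (vscal t m)) by vext.
    rewrite vnorm_opp, vnorm_scal, Rabs_pos_eq by lra.
    unfold t. replace (r / (2 * vnorm p m) * vnorm p m) with (r / 2) by (field; lra). lra. }
  specialize (Hdual _ HC). rewrite vdot_sub_r, vdot_scal_r, <- vnorm_sq in Hdual.
  assert (0 < t * (vnorm p m * vnorm p m)) by (apply Rmult_lt_0_compat; nra). lra.
Qed.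

Lemma interior_mem p C x : interior_pt p C x -> C x.
Proof.
  intros [Hx [r [Hr Hball]]]. apply Hball; [exact Hx|].
  replace (vsub x x) with vzero by vext. rewrite vnorm_vzero. exact Hr.
Qed.

Lemma cone_positive_functional p C :
  good_cone p C -> exists m, forall q, interior_pt p C q -> q <> vzero -> 0 < vdot p m q.
Proof.
  intros HC. pose proof HC as [_ [_ [_ [_ [_ [Hpt [c0 Hc0]]]]]]].
  destruct (translate_min_norm p C c0 HC (proj1 Hc0)) as [m [Hm [HCm Hmin]]].
  exists m. intros q Hq Hqn.
  destruct (classic (m = vzero)) as [->|Hmn].
  - (* then −c0 ∈ C, so c0 = 0 is an interior point and R^p is trivial *)
    assert (Ec0 : c0 = vzero).
    { apply Hpt; [apply (interior_mem p C c0 Hc0)|].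
      replace (vopp c0) with (vsub vzero c0) by vext. exact HCm. }
    rewrite Ec0 in Hc0.
    exfalso. apply Hqn. apply (pointed_interior_vzero p C HC Hc0), Hq.
  - apply (dual_pos_interior p C m q Hm Hmn); auto.
    apply (min_norm_dual p C c0 m HC Hm HCm Hmin).
Qed.

(** If the nonzero points of a closed cone [P] are
    interior to [C], then the unit vectors of [P] keep a uniform distance
    from the complement of [C] (compactness of the unit sphere of [P]). *)
Lemma unit_margin p C P :
  good_cone p P -> (forall x, P x -> interior_pt p C x \/ x = vzero) ->
  exists d, 0 < d <= 1 /\ forall u f, P u -> vnorm p u = 1 -> in_Rp p f ->
    vnorm p f < d -> C (vadd u f).
Proof.
  intros [HsP [HclP _]] Hint. apply NNPP. intros Hn.
  assert (Hbad : forall n, exists uf : vec * vec, P (fst uf) /\ vnorm p (fst uf) = 1 /\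
     in_Rp p (snd uf) /\ vnorm p (snd uf) < / INR (S n) /\ ~ C (vadd (fst uf) (snd uf))).
  { intros n. apply NNPP. intros H. apply Hn. exists (/ INR (S n)). split.
    - split; [apply inv_Sn_pos|]. rewrite <- Rinv_1. apply Rinv_le_contravar; [lra|].
      rewrite S_INR. pose proof (pos_INR n). lra.
    - intros u f Hu Hu1 Hf Hfd. apply NNPP. intros HC. apply H. exists (u, f). simpl. auto. }
  destruct (choice _ Hbad) as [uf Huf].
  set (u := fun n => fst (uf n)). set (f := fun n => snd (uf n)).
  destruct (bolzano_weierstrass p u 1) as [phi [l [Hi [Hl Hcv]]]].
  { intros n. destruct (Huf n) as [_ [H1 _]]. unfold u. lra. }
  assert (HlP : P l).
  { apply HclP; [exact Hl|]. apply (cvg_closure p P (fun n => u (phi n))); auto.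
    intros n. apply (Huf (phi n)). }
  assert (Hlnz : l <> vzero).
  { intros El. destruct (Hcv (1/2) ltac:(lra)) as [N HN]. specialize (HN N (le_n N)).
    destruct (Huf (phi N)) as [_ [H1 _]].
    rewrite El in HN. replace (vsub (u (phi N)) vzero) with (u (phi N)) in HN by vext.
    unfold u in HN. lra. }
  destruct (Hint l HlP) as [[_ [r [Hr Hball]]]|El]; [|contradiction].
  destruct (Hcv (r / 2) ltac:(lra)) as [N1 HN1].
  destruct (inv_Sn_eventually_lt (r / 2) ltac:(lra)) as [N2 HN2].
  set (n := Nat.max N1 N2).
  destruct (Huf (phi n)) as [HuP [_ [Hf [Hfn HnC]]]].
  apply HnC. apply Hball; [apply vadd_in; [apply HsP|]; auto|].
  replace (vsub (vadd (fst (uf (phi n))) (snd (uf (phi n)))) l)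
    with (vadd (vsub (u (phi n)) l) (f (phi n))) by (unfold u, f; vext).
  eapply Rle_lt_trans; [apply vnorm_add|].
  assert (A1 := HN1 n ltac:(lia)).
  assert (A2 := HN2 (phi n) ltac:(pose proof (incr_ge _ Hi n); lia)).
  unfold f. lra.
Qed.

Lemma cone_margin p C P :
  good_cone p P -> good_cone p C -> (forall x, P x -> interior_pt p C x \/ x = vzero) ->
  exists d, 0 < d <= 1 /\ forall q e, P q -> in_Rp p e ->
    vnorm p e < d * vnorm p q -> C (vadd q e).
Proof.
  intros HP HC Hint.
  destruct (unit_margin p C P HP Hint) as [d [Hd Hunit]].
  exists d. split; [exact Hd|]. intros q e Hq He Hlt.
  destruct HP as [HsP [_ [_ [_ [HscP _]]]]]. destruct HC as [_ [_ [_ [_ [HscC _]]]]].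
  pose proof (vnorm_nonneg p e).
  assert (Hqn : 0 < vnorm p q) by nra.
  set (s := / vnorm p q). assert (Hs : 0 < s) by (apply Rinv_0_lt_compat; exact Hqn).
  replace (vadd q e) with (vscal (vnorm p q) (vadd (vscal s q) (vscal s e)))
    by (apply functional_extensionality; intro; unfold vscal, vadd, s; field; lra).
  apply HscC; [lra|]. apply Hunit.
  - apply HscP; [lra | exact Hq].
  - rewrite vnorm_scal, Rabs_pos_eq by lra. unfold s. field; lra.
  - apply vscal_in, He.
  - rewrite vnorm_scal, Rabs_pos_eq by lra.
    apply Rmult_lt_reg_l with (vnorm p q); [exact Hqn|].
    unfold s. rewrite <- Rmult_assoc, Rinv_r by lra. lra.
Qed.

Lemma closed_below p P z :
  good_cone p P -> in_Rp p z -> closed_Rp p (fun y => P (vsub z y)).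
Proof.
  intros [_ [HclP _]] Hz x Hx Happ. apply HclP; [apply vsub_in; auto|].
  intros eps He. destruct (Happ eps He) as [y [Hy Hxy]].
  exists (vsub z y). split; [exact Hy|].
  replace (vsub (vsub z x) (vsub z y)) with (vsub y x) by vext.
  rewrite vnorm_sub_comm. exact Hxy.
Qed.

(** Domination property: if [m] is strictly positive on [P ∖ {0}], every
    point [z] of a compact set [K] lies above an efficient point [y] of
    [K], namely a minimiser of [⟨m,·⟩] on [K ∩ (z − P)]. *)
Lemma efficient_dominates p P m K :
  good_cone p P -> (forall q, P q -> q <> vzero -> 0 < vdot p m q) ->
  subset_Rp p K -> compact_Rp p K ->
  forall z, K z -> exists y, eff K P y /\ P (vsub z y).
Proof.
  intros HP Hm HsK HcK z Hz.
  set (Kz := fun y => K y /\ P (vsub z y)).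
  assert (HcKz : compact_Rp p Kz)
    by (apply compact_inter_closed, closed_below; auto).
  destruct (compact_lipschitz_min p Kz (vdot p m) (vnorm p m) HcKz) as [y [[Hy HPy] Hmin]].
  - exists z. split; [exact Hz|]. replace (vsub z z) with vzero by vext. apply HP.
  - apply vnorm_nonneg.
  - intros x y _ _. rewrite <- vdot_sub_r. apply cauchy_schwarz.
  - exists y. repeat split; auto. intros w Hw [q [Hq ->]].
    destruct HP as [_ [_ [_ [HaddP _]]]].
    assert (Hle : vdot p m y <= vdot p m (vsub y q)).
    { apply Hmin. split; [exact Hw|].
      replace (vsub z (vsub y q)) with (vadd (vsub z y) q) by vext. auto. }
    rewrite vdot_sub_r in Hle.
    destruct (classic (q = vzero)) as [->|Hqn]; [vext|].
    specialize (Hm q Hq Hqn). lra.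
Qed.

Lemma efficient_margin p C P d K a w q :
  d <= 1 ->
  (forall q e, P q -> in_Rp p e -> vnorm p e < d * vnorm p q -> C (vadd q e)) ->
  eff K C a -> K w -> P q -> in_Rp p a -> in_Rp p w -> in_Rp p q ->
  d * vnorm p q <= vnorm p (vsub (vsub a w) q).
Proof.
  intros Hd Hmargin [_ Ha] Hw Hq Hain Hwin Hqin.
  set (e := vsub (vsub a w) q).
  apply Rnot_lt_le. intros Hlt.
  assert (HC : C (vadd q e)) by (apply Hmargin; auto; unfold e; apply vsub_in; [apply vsub_in|]; auto).
  assert (Hwa : w = a).
  { apply (Ha w Hw). exists (vadd q e). split; [exact HC|]. unfold e; vext. }
  assert (Eq : e = vopp q) by (unfold e; rewrite Hwa; vext).
  rewrite Eq, vnorm_opp in Hlt. pose proof (vnorm_nonneg p q). nra.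
Qed.

Section EfficientSetLipschitz.

Variables (p : nat) (C P : vec -> Prop) (m : vec) (d : R).
Hypothesis HP : good_cone p P.
Hypothesis Hm : forall q, P q -> q <> vzero -> 0 < vdot p m q.
Hypothesis Hd : 0 < d <= 1.
Hypothesis Hmargin :
  forall q e, P q -> in_Rp p e -> vnorm p e < d * vnorm p q -> C (vadd q e).

Lemma kcp_efficient_nonempty K : KCP p C P K -> exists y, eff K P y.
Proof.
  intros [HsK [[x Hx] [HcK _]]].
  destruct (efficient_dominates p P m K HP Hm HsK HcK x Hx) as [y [Hy _]]. eauto.
Qed.

Lemma kcp_bounded K : KCP p C P K -> vbounded p K /\ vbounded p (eff K P).
Proof.
  intros [_ [_ [HcK _]]]. destruct (compact_bounded p K HcK) as [B HB].
  split; exists B; [exact HB|]. intros x [Hx _]; auto.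
Qed.

Lemma efficient_excess K1 K2 h :
  KCP p C P K1 -> KCP p C P K2 -> is_hausdorff p K1 K2 h ->
  forall a r, eff K1 P a -> is_dist p a (eff K2 P) r -> r <= (1 + 2 / d) * h.
Proof.
  intros HK1 HK2 Hh a r Ha Hr.
  pose proof HK1 as [HsK1 [HK1n [_ Hiff1]]]. pose proof HK2 as [HsK2 [HK2n [HcK2 _]]].
  assert (HaC : eff K1 C a) by (apply Hiff1, Ha).
  assert (Hd2 : 0 < 2 / d) by (apply Rdiv_lt_0_compat; lra).
  apply Rle_plus_epsilon. intros eps0 He0.
  set (eps := eps0 / (1 + 2 / d)).
  assert (He : 0 < eps) by (apply Rdiv_lt_0_compat; lra).
  (* a ≈ z ∈ K2 ≥ y ∈ E(K2,P), and y ≈ w ∈ K1 *)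
  destruct (hausdorff_near p K1 K2 h Hh HK2n a (proj1 Ha) eps He) as [z [Hz Haz]].
  destruct (efficient_dominates p P m K2 HP Hm HsK2 HcK2 z Hz) as [y [Hy Hzy]].
  destruct (hausdorff_near p K2 K1 h (hausdorff_sym p K1 K2 h Hh) HK1n y (proj1 Hy) eps He)
    as [w [Hw Hyw]].
  assert (Hmar := efficient_margin p C P d K1 a w (vsub z y) (proj2 Hd) Hmargin HaC Hw Hzy
    (HsK1 a (proj1 Ha)) (HsK1 w Hw) (vsub_in p z y (HsK2 z Hz) (HsK2 y (proj1 Hy)))).
  replace (vsub (vsub a w) (vsub z y)) with (vadd (vsub a z) (vsub y w)) in Hmar by vext.
  pose proof (vnorm_add p (vsub a z) (vsub y w)).
  assert (Hzy_le : vnorm p (vsub z y) <= 2 * (h + eps) / d).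
  { apply Rmult_le_reg_l with d; [lra|].
    replace (d * (2 * (h + eps) / d)) with (2 * (h + eps)) by (field; lra). lra. }
  pose proof (dist_le _ _ _ _ _ Hr Hy). pose proof (vnorm_sub_triangle p a z y).
  assert ((1 + 2 / d) * h + eps0 = (h + eps) + 2 * (h + eps) / d)
    by (unfold eps; field; lra).
  lra.
Qed.

End EfficientSetLipschitz.

Theorem proposition4p13 (p : nat) (C P : vec -> Prop) :
  good_cone p P ->
  good_cone p C ->
  (forall x, P x -> interior_pt p C x \/ x = vzero) ->
  exists M : R, 0 <= M /\
    forall K1 K2 : vec -> Prop, KCP p C P K1 -> KCP p C P K2 ->
      (exists hE, is_hausdorff p (eff K1 P) (eff K2 P) hE) /\
      (exists hK, is_hausdorff p K1 K2 hK) /\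
      (forall hE hK, is_hausdorff p (eff K1 P) (eff K2 P) hE ->
                     is_hausdorff p K1 K2 hK -> hE <= M * hK).
Proof.
  intros HP HC Hint.
  destruct (cone_positive_functional p C HC) as [m Hm].
  assert (HmP : forall q, P q -> q <> vzero -> 0 < vdot p m q)
    by (intros q Hq Hqn; destruct (Hint q Hq); [apply Hm | contradiction]; auto).
  destruct (cone_margin p C P HP HC Hint) as [d [Hd Hmargin]].
  exists (1 + 2 / d). split; [assert (0 < 2 / d) by (apply Rdiv_lt_0_compat; lra); lra|].
  intros K1 K2 HK1 HK2.
  destruct (kcp_bounded p C P K1 HK1) as [Hb1 HbE1].
  destruct (kcp_bounded p C P K2 HK2) as [Hb2 HbE2].
  pose proof (kcp_efficient_nonempty p C P m HP HmP K1 HK1).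
  pose proof (kcp_efficient_nonempty p C P m HP HmP K2 HK2).
  split; [apply hausdorff_exists; auto|].
  split; [apply hausdorff_exists; auto; [apply HK1 | apply HK2]|].
  intros hE hK HhE HhK. apply (hausdorff_le p _ _ hE _ HhE).
  - exact (efficient_excess p C P m d HP HmP Hd Hmargin K1 K2 hK HK1 HK2 HhK).
  - exact (efficient_excess p C P m d HP HmP Hd Hmargin K2 K1 hK HK2 HK1
             (hausdorff_sym p K1 K2 hK HhK)).
Qed.
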